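(* Let $N\ge 1$, let $L\in\mathbb{R}^{N\times N}$ be invertible and set $C=LL^T$. Let $D$ be the diagonal matrix with $D_{ii}=\sqrt{C_{ii}}$ (the standard deviations of $X\sim\mathcal N(0,C)$). Suppose $C$ is diagonally dominant in the sense that there is $\delta<1$ with $\sum_{j\neq i}|C_{ij}/C_{ii}|\le\delta$ for every $i$. Then $$\kappa(D^{-1}L)\le N^{1/4}\sqrt{\frac{1+\delta}{1-\delta}}.$$
   Context: For an invertible matrix $B\in\mathbb{R}^{N\times N}$, the condition number is $\kappa(B):=\|B\|_2\,\|B^{-1}\|_{S^4}$, where $\|\cdot\|_2$ is the spectral norm (largest singular value) and $\|A\|_{S^4}:=\left(\sum_{n=1}^N s_n^4\right)^{1/4}$ is the fourth Schatten norm, $s_1,\dots,s_N$ being the singular values of $A$. *)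

From mathcomp Require Import all_boot all_order all_algebra.
From mathcomp Require Import reals.
Set Implicit Arguments. Unset Strict Implicit. Unset Printing Implicit Defensive.
Import Order.TTheory GRing.Theory Num.Theory.
Local Open Scope ring_scope.

(* [s] is a (multi)set of singular values of the real square matrix [A]:
   the s_i are nonnegative and their squares are the eigenvalues of A^T A
   counted with multiplicity (char. polynomial of A^T A splits as below). *)
Definition singular_values (R : realType) (N : nat) (A : 'M[R]_N) (s : 'I_N -> R) : Prop :=
  (forall i, 0 <= s i) /\
  char_poly (A^T *m A) = \prod_(i < N) ('X - (s i ^+ 2)%:P).

Definition spec_norm_sv (R : realType) (N : nat) (s : 'I_N -> R) : R :=
  \big[Num.max/0]_(i < N) s i.

Definition schatten4_sv (R : realType) (N : nat) (s : 'I_N -> R) : R :=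
  Num.sqrt (Num.sqrt (\sum_(i < N) s i ^+ 4)).

(* condition number kappa(B) = ||B||_2 ||B^{-1}||_{S^4}, computed from
   singular values s of B and t of B^{-1}. *)
Definition kappa_sv (R : realType) (N : nat) (s t : 'I_N -> R) : R :=
  spec_norm_sv s * schatten4_sv t.

From mathcomp Require Import all_boot all_order all_algebra.
From mathcomp Require Import reals.
Set Implicit Arguments. Unset Strict Implicit. Unset Printing Implicit Defensive.
Import Order.TTheory GRing.Theory Num.Theory.
Local Open Scope ring_scope.

(* With A := D^-1 L, A A^T = D^-1 C D^-1 is the correlation matrix of C, which is
   similar to C D^-2; the columns of C D^-2 have unit diagonal and off-diagonal
   absolute sums at most delta, so Gershgorin's theorem puts every eigenvalue of
   A A^T (= the squared singular values of A) in [1 - delta, 1 + delta]. Hence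
   ||A||_2 <= sqrt (1 + delta), every singular value of A^-1 is at most
   (1 - delta)^(-1/2), and ||A^-1||_S4 <= N^(1/4) (1 - delta)^(-1/2). *)

(* Eigenvectors are row vectors in MathComp, hence the column sums. *)
Lemma eigenvalue_gershgorin (R : realFieldType) (n : nat) (M : 'M[R]_n) (a : R) :
  eigenvalue M a -> exists i, `|a - M i i| <= \sum_(j | j != i) `|M j i|.
Proof.
move=> /eigenvalueP [v vM v0].
have [j0 vj0] : exists j, v 0 j != 0.
  apply/existsP; apply: contraR v0 => /existsPn v_eq0.
  by apply/eqP/rowP => j; rewrite mxE; apply/eqP; have := v_eq0 j; rewrite negbK.
have [i _ vi_max] := @arg_maxP _ _ _ j0 predT (fun j => `|v 0 j|) isT.
exists i.
have vi_gt0 : 0 < `|v 0 i| by apply: lt_le_trans (vi_max j0 isT); rewrite normr_gt0.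
have vMi : (a - M i i) * v 0 i = \sum_(j | j != i) v 0 j * M j i.
  move/rowP/(_ i): vM; rewrite !mxE (bigD1 i) //= mulrBl => <-.
  by rewrite mulrC addrAC subrr add0r.
rewrite -(ler_pM2r vi_gt0) -normrM vMi mulr_suml.
apply: le_trans (ler_norm_sum _ _ _) _; apply: ler_sum => j _.
by rewrite normrM mulrC; apply: ler_wpM2l => //; exact: vi_max.
Qed.

Lemma eigenvalue_mulmxC (F : fieldType) (n : nat) (X Y : 'M[F]_n) (a : F) :
  X \in unitmx -> eigenvalue (X *m Y) a -> eigenvalue (Y *m X) a.
Proof.
move=> Xu /eigenvalueP [v vXY v0]; apply/eigenvalueP; exists (v *m X).
  by rewrite !mulmxA -(mulmxA v) vXY scalemxAl.
by apply: contra v0 => /eqP vX0; rewrite -(mulmxK Xu v) vX0 mul0mx.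
Qed.

Lemma eigenvalue_rightinv (F : fieldType) (n : nat) (P Q : 'M[F]_n) (a : F) :
  P *m Q = 1%:M -> eigenvalue P a -> eigenvalue Q a^-1.
Proof.
move=> PQ /eigenvalueP [v vP v0].
have v_PQ : v = a *: (v *m Q) by rewrite scalemxAl -vP -mulmxA PQ mulmx1.
have a0 : a != 0 by apply: contra v0 => /eqP a0; rewrite v_PQ a0 scale0r.
apply/eigenvalueP; exists v => //.
by rewrite {2}v_PQ scalerA mulVf // scale1r.
Qed.

Section InvertibleDiagonal.

Variables (F : fieldType) (n : nat) (d : 'rV[F]_n).
Hypothesis d_neq0 : forall i, d 0 i != 0.

Lemma mul_diag_mx_inv : diag_mx d *m diag_mx (\row_i (d 0 i)^-1) = 1%:M.
Proof.
apply/matrixP => i j; rewrite mul_diag_mx !mxE.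
by case: eqP => [->|]; rewrite ?mulfV ?mulr0.
Qed.

Lemma unitmx_diag : diag_mx d \in unitmx.
Proof. by have [] := mulmx1_unit mul_diag_mx_inv. Qed.

Lemma invmx_diag_mx : invmx (diag_mx d) = diag_mx (\row_i (d 0 i)^-1).
Proof. by rewrite -[LHS]mulmx1 -mul_diag_mx_inv mulKmx // unitmx_diag. Qed.

End InvertibleDiagonal.

Lemma gram_diag_gt0 (R : realFieldType) (n : nat) (L : 'M[R]_n) (i : 'I_n) :
  L \in unitmx -> 0 < (L *m L^T) i i.
Proof.
move=> Lu; have -> : (L *m L^T) i i = \sum_k L i k ^+ 2.
  by rewrite mxE; apply: eq_bigr => k _; rewrite mxE expr2.
rewrite lt_neqAle sumr_ge0 ?andbT => [|k _]; last exact: sqr_ge0.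
apply/eqP => /esym sum0.
have row0 : row i L = 0.
  apply/rowP => k; rewrite !mxE; apply/eqP; rewrite -sqrf_eq0.
  by apply/eqP; apply: (psumr_eq0P _ sum0) => // m _; exact: sqr_ge0.
have : ('e_i : 'rV[R]_n) = 0 by rewrite -(mulmxK Lu 'e_i) -rowE row0 mul0mx.
by move/rowP/(_ i)/eqP; rewrite !mxE !eqxx oner_eq0.
Qed.

Section DiagonallyDominantCorrelation.

Variables (R : rcfType) (n : nat) (C : 'M[R]_n) (delta : R).
Hypothesis C_sym : C^T = C.
Hypothesis C_diag_gt0 : forall i, 0 < C i i.
Hypothesis C_dominant : forall i, \sum_(j | j != i) `|C i j / C i i| <= delta.

Let D := diag_mx (\row_i Num.sqrt (C i i)).

Let D_neq0 i : (\row_i Num.sqrt (C i i)) 0 i != 0.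
Proof. by rewrite mxE sqrtr_eq0 -ltNge. Qed.

Lemma unitmx_sqrt_diag : D \in unitmx.
Proof. exact: unitmx_diag. Qed.

Lemma invmx_sqrt_diag : invmx D = diag_mx (\row_i (Num.sqrt (C i i))^-1).
Proof.
by rewrite invmx_diag_mx //; congr diag_mx; apply/rowP => i; rewrite !mxE.
Qed.

Lemma eigenvalue_correlation (a : R) :
  eigenvalue (invmx D *m C *m invmx D) a -> `|a - 1| <= delta.
Proof.
have Du : invmx D \in unitmx by rewrite unitmx_inv unitmx_sqrt_diag.
rewrite -mulmxA => /(eigenvalue_mulmxC Du); rewrite invmx_sqrt_diag.
set M := _ *m _ => /eigenvalue_gershgorin [i].
have Mji j : M j i = C i j / C i i.
  rewrite /M !mul_mx_diag !mxE -mulrA -invfM -expr2 sqr_sqrtr ?ltW //.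
  by rewrite -{1}C_sym mxE.
rewrite Mji mulfV ?gt_eqF // => /le_trans; apply.
by under eq_bigr do rewrite Mji.
Qed.

End DiagonallyDominantCorrelation.

Lemma singular_values_eigenvalue (R : realType) (n : nat) (A : 'M[R]_n) s i :
  singular_values A s -> eigenvalue (A^T *m A) (s i ^+ 2).
Proof.
move=> [_ sA]; rewrite eigenvalue_root_char sA /root horner_prod.
by rewrite (bigD1 i) //= !hornerE subrr mul0r.
Qed.

Lemma spec_norm_sv_le (R : realType) (n : nat) (s : 'I_n -> R) (b : R) :
  0 <= b -> (forall i, 0 <= s i) -> (forall i, s i ^+ 2 <= b) ->
  spec_norm_sv s <= Num.sqrt b.
Proof.
move=> b0 s0 sb; apply: bigmax_le => [|i _]; first exact: sqrtr_ge0.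
by rewrite -(ger0_norm (s0 i)) -sqrtr_sqr ler_wsqrtr.
Qed.

Lemma schatten4_sv_le (R : realType) (n : nat) (s : 'I_n -> R) (b : R) :
  0 <= b -> (forall i, s i ^+ 2 <= b) ->
  schatten4_sv s <= Num.sqrt (Num.sqrt n%:R) * Num.sqrt b.
Proof.
move=> b0 sb; have -> : b = Num.sqrt (b ^+ 2) by rewrite sqrtr_sqr ger0_norm.
rewrite -!sqrtrM ?sqrtr_ge0 ?ler0n //; apply/ler_wsqrtr/ler_wsqrtr.
have -> : n%:R * b ^+ 2 = \sum_(i < n) b ^+ 2 by rewrite sumr_const card_ord mulr_natl.
apply: ler_sum => i _; rewrite -[4%N]/(2 * 2)%N exprM.
by apply: lerXn2r; rewrite ?nnegrE ?sqr_ge0.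
Qed.

Lemma kappa_sv_le (R : realType) (n : nat) (s t : 'I_n -> R) (b c : R) :
  0 <= b -> 0 <= c -> (forall i, 0 <= s i) ->
  (forall i, s i ^+ 2 <= b) -> (forall i, t i ^+ 2 <= c) ->
  kappa_sv s t <= Num.sqrt (Num.sqrt n%:R) * Num.sqrt (b * c).
Proof.
move=> b0 c0 s0 sb tc; rewrite sqrtrM // mulrCA.
apply: ler_pM; rewrite ?bigmax_ge_id ?sqrtr_ge0 //.
  exact: spec_norm_sv_le.
exact: schatten4_sv_le.
Qed.

Section SpectrumNearOne.

Variables (R : realType) (n : nat) (A : 'M[R]_n) (delta : R).
Hypothesis A_unit : A \in unitmx.
Hypothesis AAT_spectrum : forall a, eigenvalue (A *m A^T) a -> `|a - 1| <= delta.

Lemma singular_values_le s : singular_values A s -> forall i, s i ^+ 2 <= 1 + delta.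
Proof.
move=> s_sv i; have ATu : A^T \in unitmx by rewrite unitmx_tr.
have /(eigenvalue_mulmxC ATu)/AAT_spectrum := singular_values_eigenvalue i s_sv.
by rewrite ler_distl => /andP[].
Qed.

Lemma singular_values_invmx_le t : delta < 1 ->
  singular_values (invmx A) t -> forall i, t i ^+ 2 <= (1 - delta)^-1.
Proof.
move=> delta_lt1 t_sv i.
have inv_gram : (invmx A)^T *m invmx A *m (A *m A^T) = 1%:M.
  by rewrite -mulmxA (mulmxA (invmx A)) mulVmx // mul1mx -trmx_mul mulmxV // trmx1.
have /(eigenvalue_rightinv inv_gram)/AAT_spectrum := singular_values_eigenvalue i t_sv.
rewrite ler_distl => /andP[lb _].
(* As [0^-1 = 0], [t i = 0] would contradict [1 - delta <= (t i ^+ 2)^-1]. *)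
have t_gt0 : 0 < t i ^+ 2.
  rewrite lt_neqAle sqr_ge0 andbT eq_sym; apply: contraTN lb => /eqP->.
  by rewrite invr0 -ltNge subr_gt0.
by rewrite -[t i ^+ 2]invrK lef_pV2 ?posrE ?invr_gt0 ?subr_gt0.
Qed.

End SpectrumNearOne.

Theorem proposition1 (R : realType) (N : nat) (L : 'M[R]_N) (delta : R) :
  (0 < N)%N ->
  L \in unitmx ->
  let C := L *m L^T in
  let D := diag_mx (\row_(i < N) Num.sqrt (C i i)) in
  delta < 1 ->
  (forall i : 'I_N, \sum_(j < N | j != i) `|C i j / C i i| <= delta) ->
  forall s t : 'I_N -> R,
    singular_values (invmx D *m L) s ->
    singular_values (invmx (invmx D *m L)) t ->
    kappa_sv s t <= Num.sqrt (Num.sqrt (N%:R)) * Num.sqrt ((1 + delta) / (1 - delta)).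
Proof.
move=> N_gt0 Lu C D delta_lt1 C_dominant s t s_sv t_sv.
have C_sym : C^T = C by rewrite trmx_mul trmxK.
have C_diag_gt0 i : 0 < C i i by apply: gram_diag_gt0.
set A := invmx D *m L.
have Au : A \in unitmx by rewrite unitmx_mul unitmx_inv Lu unitmx_sqrt_diag.
have AAT : A *m A^T = invmx D *m C *m invmx D.
  by rewrite trmx_mul trmx_inv tr_diag_mx !mulmxA.
have AAT_spectrum a : eigenvalue (A *m A^T) a -> `|a - 1| <= delta.
  by rewrite AAT; apply: eigenvalue_correlation.
have delta_ge0 : 0 <= delta.
  by apply: le_trans (C_dominant (Ordinal N_gt0)); exact: sumr_ge0.
apply: (kappa_sv_le (b := 1 + delta) (c := (1 - delta)^-1)) s_sv.1 _ _ => [||i|i].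
- by rewrite addr_ge0.
- by rewrite invr_ge0 subr_ge0 ltW.
- exact: (singular_values_le Au AAT_spectrum s_sv).
- exact: (singular_values_invmx_le Au AAT_spectrum delta_lt1 t_sv).
Qed.
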